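(* Let $d\ge 2$ and $E,F\subset\mathbb F_q^d$. Then $$\sum_{t\in\mathbb F_q}\nu^2(t)\leq q^{-1}|E|^2|F|^2+q^{2d}|F|\,\mathfrak M(E),$$ and $$\sum_{t\in\mathbb F_q}\nu^2(t)\leq q^{-1}|E|^2|F|^2+q^{3d}\Big|\sum_{m\in S_0}\overline{\widehat E(m)}\widehat F(m)\Big|^2+q^{2d}|F|\,\mathfrak M^*(E).$$
   Context: $\mathbb F_q$ is a finite field of characteristic greater than two, $\mathbb F_q^*=\mathbb F_q\setminus\{0\}$, and $\chi$ is a fixed nontrivial additive character of $\mathbb F_q$. For $f:\mathbb F_q^d\to\mathbb C$, $\widehat f(m)=q^{-d}\sum_{x\in\mathbb F_q^d}\chi(-m\cdot x)f(x)$; sets are identified with their indicator functions. For $m\in\mathbb F_q^d$, $\|m\|=m_1^2+\dots+m_d^2$; $S_r=\{x\in\mathbb F_q^d:\|x\|=r\}$. $\nu(t)=|\{(x,y)\in E\times F:\|x-y\|=t\}|$. $\mathfrak M(E)=\max_{r\in\mathbb F_q}\sum_{m\in S_r}|\widehat E(m)|^2$ and $\mathfrak M^*(E)=\max_{r\in\mathbb F_q^*}\sum_{m\in S_r}|\widehat E(m)|^2$. *)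

From HB Require Import structures.
From mathcomp Require Import all_boot all_order all_algebra all_field.
Set Implicit Arguments. Unset Strict Implicit. Unset Printing Implicit Defensive.
Import Order.TTheory GRing.Theory Num.Theory.
Local Open Scope ring_scope.

Section Defs.
Variables (K : finFieldType) (d : nat).

Definition dotv (m x : 'rV[K]_d) : K := \sum_i m 0 i * x 0 i.
Definition normv (m : 'rV[K]_d) : K := \sum_i m 0 i ^+ 2.

Definition is_add_char (chi : K -> algC) : Prop :=
  (forall x y, chi (x + y) = chi x * chi y) /\ (forall x, `|chi x| = 1).
Definition nontrivial_char (chi : K -> algC) : Prop := exists x, chi x != 1.

Definition q : nat := #|K|.

Definition ind (E : {set 'rV[K]_d}) (x : 'rV[K]_d) : algC := (x \in E)%:R.

Definition fhat (chi : K -> algC) (f : 'rV[K]_d -> algC) (m : 'rV[K]_d) : algC :=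
  (q%:R ^+ d)^-1 * \sum_x chi (- dotv m x) * f x.

Definition nu (E F : {set 'rV[K]_d}) (t : K) : nat :=
  #|[set p : 'rV[K]_d * 'rV[K]_d | (p.1 \in E) && (p.2 \in F) && (normv (p.1 - p.2) == t)]|.

Definition sphere_mass (chi : K -> algC) (E : {set 'rV[K]_d}) (r : K) : algC :=
  \sum_(m | normv m == r) `|fhat chi (ind E) m| ^+ 2.

Definition Mfrak (chi : K -> algC) (E : {set 'rV[K]_d}) : algC :=
  \big[Order.max/0]_(r : K) sphere_mass chi E r.
Definition Mfrak_star (chi : K -> algC) (E : {set 'rV[K]_d}) : algC :=
  \big[Order.max/0]_(r : K | r != 0) sphere_mass chi E r.
End Defs.

From HB Require Import structures.
From mathcomp Require Import all_boot all_order all_algebra all_field.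
From mathcomp Require Import ring.
Import Order.TTheory GRing.Theory Num.Theory.
Local Open Scope ring_scope.

(* Put e = 1_E, f = 1_F and A(s) = sum_{x,y} e(x) f(y) chi(-s ||x - y||).
   Fourier inversion on the line gives nu(t) = q^-1 sum_s chi(s t) A(s), so by
   Parseval on K,  sum_t nu(t)^2 = q^-1 sum_s |A(s)|^2,  with A(0) = |E||F|.
   For s = (4u)^-1 != 0, completing the square in the Gauss sum
   g(u) = sum_m chi(u ||m||) (whose modulus squared is q^d) shows
     q^(2d) B(u) = g(u) A(s),   B(u) = sum_m chi(u ||m||) conj(E^(m)) F^(m),
   hence |A(s)|^2 = q^(3d) |B(u)|^2.  Grouping m by the sphere ||m|| = r,
   B(u) = sum_r chi(u r) Psi(r) with Psi(r) = sum_{m in S_r} conj(E^(m)) F^(m),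
   and Parseval on K again yields
     sum_t nu(t)^2 <= q^-1 |E|^2 |F|^2 + q^(3d) sum_r |Psi(r)|^2.
   Cauchy-Schwarz on each sphere and Plancherel (sum_m |F^(m)|^2 = q^-d |F|)
   bound the last sum by q^-d |F| M(E), or by |Psi(0)|^2 + q^-d |F| M*(E). *)

Set Implicit Arguments. Unset Strict Implicit. Unset Printing Implicit Defensive.

Section Inequalities.
Variable C : numClosedFieldType.

(* Cauchy-Schwarz for finite (filtered) sums, from Lagrange's identity
   sum_{i,j} |a_i b_j - a_j b_i|^2 = 2 (|a|^2 |b|^2 - |<a, b>|^2). *)
Lemma cauchy_schwarz (I : finType) (P : pred I) (a b : I -> C) :
  `|\sum_(i | P i) (a i)^* * b i| ^+ 2
    <= (\sum_(i | P i) `|a i| ^+ 2) * (\sum_(i | P i) `|b i| ^+ 2).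
Proof.
set T := \sum_(i | P i) (a i)^* * b i.
set Na := \sum_(i | P i) _; set Nb := \sum_(i | P i) _.
have lagrange : \sum_(i | P i) \sum_(j | P j) `|a i * b j - a j * b i| ^+ 2
    = Na * Nb + Nb * Na - T^* * T - T * T^*.
  rewrite /T /Na /Nb rmorph_sum !big_distrlr /= -big_split -!sumrB /=.
  apply: eq_bigr => i _; rewrite -big_split -!sumrB /=.
  by apply: eq_bigr => j _; rewrite !normCK rmorphB !rmorphM /= ?conjCK; ring.
have : 0 <= Na * Nb + Nb * Na - T^* * T - T * T^*.
  by rewrite -lagrange; do 2!apply: sumr_ge0 => ? _; rewrite exprn_ge0.
have -> : Na * Nb + Nb * Na - T^* * T - T * T^* = 2 * (Na * Nb - T * T^*) by ring.
by rewrite pmulr_rge0 // subr_ge0 normCK.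
Qed.

End Inequalities.

Section NonnegMax.
Variable R : numDomainType.

(* The maxima M(E), M*(E) are folds of Order.max from 0, which is not a
   monoid law on a partially ordered field; for nonnegative terms they
   nevertheless behave as maxima. *)
Lemma bigmax_nneg_ge0 (I : Type) (r : seq I) (P : pred I) (h : I -> R) :
  (forall i, 0 <= h i) -> 0 <= \big[Order.max/0]_(i <- r | P i) h i.
Proof.
move=> h_ge0; elim/big_ind: _ => // x y x_ge0 y_ge0.
by rewrite comparable_le_max ?x_ge0 // real_comparable ?ger0_real.
Qed.

Lemma le_bigmax_nneg (I : eqType) (r : seq I) (P : pred I) (h : I -> R) j :
  (forall i, 0 <= h i) -> j \in r -> P j ->
  h j <= \big[Order.max/0]_(i <- r | P i) h i.
Proof.
move=> h_ge0; elim: r => // i r IHr; rewrite inE big_cons => j_ir Pj.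
case: ifP => Pi; last first.
  by case/orP: j_ir => [/eqP eq_ji|/IHr->//]; rewrite -eq_ji Pj in Pi.
rewrite comparable_le_max; last first.
  by rewrite real_comparable ?ger0_real ?bigmax_nneg_ge0.
by case/orP: j_ir => [/eqP->|/IHr->//]; rewrite ?lexx ?orbT.
Qed.

End NonnegMax.

(* An element fixed by multiplication with some c != 1 vanishes; applied
   with c = chi(x0) this is the core of every orthogonality relation below. *)
Lemma mul_fixed_eq0 (R : idomainType) (c x : R) : c != 1 -> x = c * x -> x = 0.
Proof.
move=> c_neq1 x_fixed; apply/eqP.
have : (1 - c) * x == 0 by rewrite mulrBl -x_fixed mul1r subrr.
by rewrite mulf_eq0 subr_eq0 eq_sym (negbTE c_neq1).
Qed.

Section FieldSize.
Variables (K : finFieldType) (d : nat).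

Lemma q_gt0 : (0 < q K)%N.
Proof. by apply/card_gt0P; exists 0. Qed.

Lemma q_neq0 : (q K)%:R != 0 :> algC.
Proof. by rewrite pnatr_eq0 -lt0n q_gt0. Qed.

Lemma qd_gt0 : 0 < (q K)%:R ^+ d :> algC.
Proof. by rewrite exprn_gt0 // ltr0n q_gt0. Qed.

Lemma qd_neq0 : (q K)%:R ^+ d != 0 :> algC.
Proof. by rewrite gt_eqF ?qd_gt0. Qed.

End FieldSize.

Section Characters.
Variables (K : finFieldType) (chi : K -> algC).
Hypotheses (hchi : is_add_char chi) (hnt : nontrivial_char chi).

Lemma charD x y : chi (x + y) = chi x * chi y.
Proof. by case: hchi. Qed.

Lemma char_neq0 x : chi x != 0.
Proof. by case: hchi => _ chi_unit; rewrite -normr_eq0 chi_unit oner_eq0. Qed.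

Lemma char0 : chi 0 = 1.
Proof.
apply: (mulfI (char_neq0 0)).
by rewrite -charD addr0 mulr1.
Qed.

(* Characters take values on the unit circle, so chi(-x) = conj(chi x). *)
Lemma charN x : chi (- x) = (chi x)^*.
Proof.
apply: (mulfI (char_neq0 x)); rewrite -charD subrr char0 -normCK.
by case: hchi => _ ->; rewrite expr1n.
Qed.

Lemma char_mul_conj x y : chi x * (chi y)^* = chi (x - y).
Proof. by rewrite -charN -charD. Qed.

Lemma sum_char_scale c : \sum_a chi (c * a) = if c == 0 then (q K)%:R else 0.
Proof.
case: eqP => [->|/eqP c_neq0].
  by under eq_bigr do rewrite mul0r char0; rewrite sumr_const.
have -> : \sum_a chi (c * a) = \sum_a chi a.
  by rewrite [RHS](reindex_inj (mulfI c_neq0)).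
case: hnt => x0 chi_x0; apply: (mul_fixed_eq0 chi_x0).
rewrite {1}(reindex_inj (addrI x0)) mulr_sumr /=.
by apply: eq_bigr => a _; rewrite charD.
Qed.

Lemma parseval_line (a : K -> algC) :
  \sum_t `|\sum_s chi (s * t) * a s| ^+ 2 = (q K)%:R * \sum_s `|a s| ^+ 2.
Proof.
transitivity (\sum_s \sum_s' (a s * (a s')^*) * \sum_t chi ((s - s') * t)).
  under eq_bigr do rewrite normCK rmorph_sum big_distrlr /=.
  rewrite exchange_big; apply: eq_bigr => s _; rewrite exchange_big /=.
  apply: eq_bigr => s' _; rewrite mulr_sumr; apply: eq_bigr => t _.
  by rewrite rmorphM /= mulrBl -char_mul_conj; ring.
rewrite mulr_sumr; apply: eq_bigr => s _.
rewrite (bigD1 s) //= [X in _ + X]big1 => [|s' /negbTE s'_neq_s].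
  by rewrite subrr sum_char_scale eqxx addr0 -normCK mulrC.
by rewrite sum_char_scale subr_eq0 eq_sym s'_neq_s mulr0.
Qed.

End Characters.

Section QuadraticForm.
Variables (K : finFieldType) (d : nat).
Notation V := 'rV[K]_d.

Lemma dotvC (m x : V) : dotv m x = dotv x m.
Proof. by apply: eq_bigr => i _; rewrite mulrC. Qed.

Lemma dotvDl (m1 m2 x : V) : dotv (m1 + m2) x = dotv m1 x + dotv m2 x.
Proof. by rewrite /dotv -big_split; apply: eq_bigr => i _; rewrite mxE mulrDl. Qed.

Lemma dotvZl c (m x : V) : dotv (c *: m) x = c * dotv m x.
Proof. by rewrite /dotv mulr_sumr; apply: eq_bigr => i _; rewrite mxE mulrA. Qed.

Lemma dotvZr c (m x : V) : dotv m (c *: x) = c * dotv m x.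
Proof. by rewrite dotvC dotvZl dotvC. Qed.

Lemma dotvBr (m x y : V) : dotv m (x - y) = dotv m x - dotv m y.
Proof. by rewrite dotvC dotvDl -scaleN1r dotvZl mulN1r !(dotvC m). Qed.

Lemma dotv0r (m : V) : dotv m 0 = 0.
Proof. by rewrite -(scale0r 0) dotvZr mul0r. Qed.

Lemma normvD (a b : V) : normv (a + b) = normv a + 2 * dotv a b + normv b.
Proof.
rewrite /normv /dotv mulr_sumr -!big_split /=.
by apply: eq_bigr => i _; rewrite mxE; ring.
Qed.

Lemma normvZ c (a : V) : normv (c *: a) = c ^+ 2 * normv a.
Proof. by rewrite /normv mulr_sumr; apply: eq_bigr => i _; rewrite mxE exprMn. Qed.

Lemma normv0 : normv (0 : V) = 0.
Proof. by rewrite -(scale0r 0) normvZ expr0n mul0r. Qed.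

End QuadraticForm.

Section FourierAnalysis.
Variables (K : finFieldType) (chi : K -> algC).
Hypotheses (hchi : is_add_char chi) (hnt : nontrivial_char chi).
Variable d : nat.
Notation V := 'rV[K]_d.
Notation qd := ((q K)%:R ^+ d : algC).

Lemma sum_char_dot (v : V) :
  \sum_(m : V) chi (dotv m v) = if v == 0 then qd else 0.
Proof.
case: eqP => [->|/eqP v_neq0].
  under eq_bigr do rewrite dotv0r (char0 hchi).
  by rewrite sumr_const card_mx mul1n -natrX.
have [i vi_neq0] : exists i, v 0 i != 0.
  apply/existsP; apply: contraR v_neq0 => /existsPn v_eq0.
  by apply/eqP/rowP => i; rewrite mxE; apply/eqP/negPn/v_eq0.
case: hnt => x0 chi_x0; apply: (mul_fixed_eq0 chi_x0).
pose w : V := (x0 / v 0 i) *: delta_mx 0 i.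
have w_dot_v : dotv w v = x0.
  rewrite /dotv (bigD1 i) //= big1 => [|j /negbTE j_neq_i].
    by rewrite !mxE !eqxx mulr1 addr0 divfK.
  by rewrite !mxE j_neq_i andbF mulr0 mul0r.
rewrite {1}(reindex_inj (addrI w)) mulr_sumr /=.
by apply: eq_bigr => m _; rewrite dotvDl (charD hchi) w_dot_v.
Qed.

Lemma fhat_conj_mul (f g : V -> algC) m :
  (fhat chi f m)^* * fhat chi g m
  = qd^-1 * qd^-1 * \sum_x \sum_y (f x)^* * g y * chi (dotv m (x - y)).
Proof.
rewrite /fhat rmorphM rmorph_sum fmorphV rmorphXn rmorph_nat mulrACA.
rewrite big_distrlr /=; congr (_ * _); apply: eq_bigr => x _; apply: eq_bigr => y _.
by rewrite rmorphM /= -(charN hchi) opprK dotvBr (charD hchi); ring.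
Qed.

Lemma plancherel (f : V -> algC) :
  \sum_m `|fhat chi f m| ^+ 2 = qd^-1 * \sum_x `|f x| ^+ 2.
Proof.
under eq_bigr do rewrite normCKC fhat_conj_mul.
rewrite -mulr_sumr exchange_big /=; under eq_bigr do rewrite exchange_big /=.
rewrite -mulrA; congr (_ * _); rewrite mulr_sumr; apply: eq_bigr => x _.
rewrite (bigD1 x) //= [X in _ + X]big1 => [|y /negbTE y_neq_x].
  rewrite -mulr_sumr subrr sum_char_dot eqxx addr0 normCKC.
  by rewrite mulrCA mulVf ?qd_neq0 ?mulr1.
by rewrite -mulr_sumr sum_char_dot subr_eq0 eq_sym y_neq_x !mulr0.
Qed.

Hypothesis h2 : (2 : K) != 0.

Lemma four_neq0 : (4 : K) != 0.
Proof. by rewrite (_ : 4 = 2 * 2) ?mulf_neq0 //; ring. Qed.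

Definition gauss (u : K) : algC := \sum_(m : V) chi (u * normv m).

(* Completing the square: u ||m|| + m.v = u ||m + v/(2u)|| - ||v||/(4u). *)
Lemma gauss_complete_square u (v : V) : u != 0 ->
  \sum_(m : V) chi (u * normv m + dotv m v) = chi (- ((4 * u)^-1 * normv v)) * gauss u.
Proof.
move=> u_neq0; set a : V := (2 * u)^-1 *: v.
have square (m : V) : u * normv m + dotv m v = u * normv (m + a) - (4 * u)^-1 * normv v.
  by rewrite normvD normvZ dotvZr /a; field; rewrite u_neq0 four_neq0 h2.
under eq_bigr do rewrite square (charD hchi).
by rewrite -mulr_suml mulrC /gauss [in RHS](reindex_inj (addIr a)).
Qed.

Lemma gauss_norm u : u != 0 -> `|gauss u| ^+ 2 = qd.
Proof.
move=> u_neq0; rewrite normCK /gauss rmorph_sum big_distrlr exchange_big /=.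
have square (m' w : V) : u * normv (w + m') - u * normv m'
    = u * normv w + dotv m' ((2 * u) *: w).
  by rewrite normvD dotvZr (dotvC m'); ring.
transitivity (\sum_(m' : V) \sum_(w : V) chi (u * normv w) * chi (dotv m' ((2 * u) *: w))).
  apply: eq_bigr => m' _; rewrite (reindex_inj (addIr m')) /=.
  by apply: eq_bigr => w _; rewrite (char_mul_conj hchi) square (charD hchi).
rewrite exchange_big (bigD1 0) //= [X in _ + X]big1 => [|w w_neq0].
  by rewrite -mulr_sumr sum_char_dot scaler0 eqxx normv0 mulr0 (char0 hchi) mul1r addr0.
rewrite -mulr_sumr sum_char_dot scaler_eq0 mulf_eq0 (negbTE h2) (negbTE u_neq0).
by rewrite (negbTE w_neq0) mulr0.
Qed.

End FourierAnalysis.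

Section SphereMass.
Variables (K : finFieldType) (chi : K -> algC) (d : nat) (E : {set 'rV[K]_d}).

Lemma sphere_mass_ge0 r : 0 <= sphere_mass chi E r.
Proof. by apply: sumr_ge0 => m _; rewrite exprn_ge0. Qed.

Lemma sphere_mass_le_Mfrak r : sphere_mass chi E r <= Mfrak chi E.
Proof. exact: le_bigmax_nneg sphere_mass_ge0 (mem_index_enum r) _. Qed.

Lemma sphere_mass_le_Mfrak_star r : r != 0 -> sphere_mass chi E r <= Mfrak_star chi E.
Proof. exact: le_bigmax_nneg sphere_mass_ge0 (mem_index_enum r). Qed.

Lemma Mfrak_star_ge0 : 0 <= Mfrak_star chi E.
Proof. exact: bigmax_nneg_ge0 sphere_mass_ge0. Qed.

End SphereMass.

Section DistanceCounting.
Variables (K : finFieldType) (chi : K -> algC).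
Hypotheses (hchi : is_add_char chi) (hnt : nontrivial_char chi) (h2 : (2 : K) != 0).
Variables (d : nat) (E F : {set 'rV[K]_d}).
Notation V := 'rV[K]_d.
Notation qq := ((q K)%:R : algC).
Notation qd := ((q K)%:R ^+ d : algC).
Notation e := (ind E).
Notation f := (ind F).

Lemma sum_ind (G : {set V}) : \sum_x ind G x = #|G|%:R.
Proof.
rewrite -sum1_card natr_sum [RHS]big_mkcond /=.
by apply: eq_bigr => x _; rewrite /ind; case: (x \in G).
Qed.

Definition dist_transform (s : K) : algC :=
  \sum_x \sum_y e x * f y * chi (- (s * normv (x - y))).

Lemma dist_transform0 : dist_transform 0 = #|E|%:R * #|F|%:R.
Proof.
rewrite -!sum_ind big_distrlr; apply: eq_bigr => x _; apply: eq_bigr => y _.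
by rewrite mul0r oppr0 (char0 hchi) mulr1.
Qed.

Lemma nu_inversion t : (nu E F t)%:R = qq^-1 * \sum_s chi (s * t) * dist_transform s.
Proof.
have -> : (nu E F t)%:R = \sum_x \sum_y e x * f y * (normv (x - y) == t)%:R.
  rewrite /nu -sum1_card natr_sum big_mkcond /= [RHS]pair_big /=.
  apply: eq_bigr => -[x y] _; rewrite inE /= /ind.
  by case: (x \in E); case: (y \in F); case: (normv (x - y) == t);
    rewrite ?mulr0 ?mul0r ?mulr1.
transitivity (qq^-1 * \sum_s \sum_x \sum_y
    chi (s * t) * (e x * f y * chi (- (s * normv (x - y))))); last first.
  congr (_ * _); apply: eq_bigr => s _; rewrite mulr_sumr.
  by apply: eq_bigr => x _; rewrite mulr_sumr.
rewrite [in RHS]exchange_big mulr_sumr; apply: eq_bigr => x _.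
rewrite exchange_big mulr_sumr; apply: eq_bigr => y _.
transitivity (qq^-1 * (e x * f y * \sum_s chi ((t - normv (x - y)) * s))).
  rewrite (sum_char_scale hchi hnt) subr_eq0 eq_sym; case: eqP => _; last by rewrite !mulr0.
  by rewrite mulr1 mulrCA mulVf ?q_neq0 ?mulr1.
rewrite !mulr_sumr; apply: eq_bigr => s _.
by rewrite mulrBl (charD hchi) [t * s]mulrC [normv _ * s]mulrC; ring.
Qed.

Lemma sum_nu_sq : \sum_t ((nu E F t) ^ 2)%:R = qq^-1 * \sum_s `|dist_transform s| ^+ 2.
Proof.
transitivity (\sum_t qq^-1 ^+ 2 * `|\sum_s chi (s * t) * dist_transform s| ^+ 2).
  apply: eq_bigr => t _.
  by rewrite natrX -(normr_nat algC (nu E F t)) nu_inversion normrM exprMn normfV normr_nat.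
rewrite -mulr_sumr (parseval_line hchi hnt) mulrA; congr (_ * _).
by rewrite expr2 -mulrA mulVf ?q_neq0 ?mulr1.
Qed.

Definition sphere_pairing (r : K) : algC :=
  \sum_(m | normv m == r) (fhat chi e m)^* * fhat chi f m.

Definition twisted_pairing (u : K) : algC :=
  \sum_(m : V) chi (u * normv m) * ((fhat chi e m)^* * fhat chi f m).

Lemma twisted_pairingE u : u != 0 ->
  twisted_pairing u = qd^-1 * qd^-1 * gauss chi d u * dist_transform (4 * u)^-1.
Proof.
move=> u_neq0.
transitivity (qd^-1 * qd^-1 * \sum_x \sum_y
    e x * f y * \sum_(m : V) chi (u * normv m + dotv m (x - y))).
  rewrite /twisted_pairing; under eq_bigr do rewrite (fhat_conj_mul hchi) mulrCA.
  rewrite -mulr_sumr; congr (_ * _).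
  transitivity (\sum_(m : V) \sum_x \sum_y
      e x * f y * chi (u * normv m + dotv m (x - y))).
    apply: eq_bigr => m _; rewrite mulr_sumr; apply: eq_bigr => x _.
    by rewrite mulr_sumr; apply: eq_bigr => y _; rewrite (charD hchi) conjC_nat; ring.
  rewrite exchange_big; apply: eq_bigr => x _; rewrite exchange_big.
  by apply: eq_bigr => y _; rewrite mulr_sumr.
rewrite -[RHS]mulrA; congr (_ * _); rewrite /dist_transform mulr_sumr; apply: eq_bigr => x _.
rewrite mulr_sumr; apply: eq_bigr => y _.
by rewrite (gauss_complete_square hchi h2) //; ring.
Qed.

(* Since |g(u)|^2 = q^d, this gives |A(s)|^2 = q^(3d) |B(u)|^2. *)
Lemma dist_transform_sq u : u != 0 ->
  `|dist_transform (4 * u)^-1| ^+ 2 = qd ^+ 3 * `|twisted_pairing u| ^+ 2.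
Proof.
move=> u_neq0; rewrite twisted_pairingE // !normrM !exprMn gauss_norm //.
rewrite normfV (gtr0_norm (qd_gt0 K d)); field; exact: qd_neq0.
Qed.

(* B(u) = sum_r chi(r u) Psi(r), so Parseval on K applies. *)
Lemma sum_twisted_pairing_sq :
  \sum_u `|twisted_pairing u| ^+ 2 = qq * \sum_r `|sphere_pairing r| ^+ 2.
Proof.
rewrite -(parseval_line hchi hnt); apply: eq_bigr => u _; congr (`|_| ^+ 2).
rewrite /twisted_pairing (partition_big (@normv K d) predT) //=.
apply: eq_bigr => r _; rewrite /sphere_pairing mulr_sumr.
by apply: eq_bigr => m /eqP->; rewrite (mulrC u).
Qed.

(* The reduction of sum_t nu(t)^2 to the sphere pairings; the term s = 0
   contributes the main term q^-1 |E|^2 |F|^2. *)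
Lemma sum_nu_sq_le : \sum_t ((nu E F t) ^ 2)%:R
  <= qq^-1 * (#|E|%:R ^+ 2) * (#|F|%:R ^+ 2) + qd ^+ 3 * \sum_r `|sphere_pairing r| ^+ 2.
Proof.
have inv4_inj : injective (fun u : K => (4 * u)^-1).
  by move=> x y /invr_inj /(mulfI (four_neq0 h2)).
rewrite sum_nu_sq (reindex_inj inv4_inj) (bigD1 0) //= mulr0 invr0.
rewrite dist_transform0 normrM !normr_nat exprMn mulrDr -mulrA lerD2l.
under eq_bigr => u u_neq0 do rewrite dist_transform_sq //.
rewrite -mulr_sumr.
apply: (@le_trans _ _ (qq^-1 * (qd ^+ 3 * \sum_u `|twisted_pairing u| ^+ 2))).
  apply: ler_wpM2l; first by rewrite invr_ge0 ler0n.
  apply: ler_wpM2l; first by rewrite exprn_ge0 ?ltW ?qd_gt0.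
  by rewrite [leRHS](bigD1 0) //= ler_wpDl ?exprn_ge0.
by rewrite sum_twisted_pairing_sq mulrCA mulKf ?q_neq0.
Qed.

Lemma sum_sphere_mass : \sum_r sphere_mass chi F r = qd^-1 * #|F|%:R.
Proof.
transitivity (\sum_(m : V) `|fhat chi f m| ^+ 2).
  by rewrite [RHS](partition_big (@normv K d) predT).
rewrite (plancherel hchi hnt) -sum_ind; congr (_ * _); apply: eq_bigr => x _.
by rewrite /ind; case: (x \in F); rewrite ?normr1 ?normr0 ?expr1n ?expr0n.
Qed.

Lemma sphere_pairing_sq r :
  `|sphere_pairing r| ^+ 2 <= sphere_mass chi E r * sphere_mass chi F r.
Proof. exact: cauchy_schwarz. Qed.

Lemma sum_sphere_pairing_sq_le :
  \sum_r `|sphere_pairing r| ^+ 2 <= Mfrak chi E * (qd^-1 * #|F|%:R).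
Proof.
rewrite -sum_sphere_mass mulr_sumr; apply: ler_sum => r _.
apply: le_trans (sphere_pairing_sq r) _.
by rewrite ler_wpM2r ?sphere_mass_ge0 ?sphere_mass_le_Mfrak.
Qed.

Lemma sum_sphere_pairing_sq_le_star : \sum_r `|sphere_pairing r| ^+ 2
  <= `|sphere_pairing 0| ^+ 2 + Mfrak_star chi E * (qd^-1 * #|F|%:R).
Proof.
rewrite (bigD1 0) //= lerD2l -sum_sphere_mass mulr_sumr.
rewrite [leRHS](bigD1 0) //= ler_wpDl ?mulr_ge0 ?sphere_mass_ge0 ?Mfrak_star_ge0 //.
apply: ler_sum => r r_neq0; apply: le_trans (sphere_pairing_sq r) _.
by rewrite ler_wpM2r ?sphere_mass_ge0 ?sphere_mass_le_Mfrak_star.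
Qed.

End DistanceCounting.

Unset Implicit Arguments.

Theorem mainTheorem7 (K : finFieldType) (hchar : 2 \notin [pchar K])
  (chi : K -> algC) (hchi : is_add_char chi) (hnt : nontrivial_char chi)
  (d : nat) (hd : (2 <= d)%N) (E F : {set 'rV[K]_d}) :
  let qq : algC := (q K)%:R in
  let S := \sum_(t : K) ((nu E F t) ^ 2)%:R : algC in
  S <= qq^-1 * (#|E|%:R ^+ 2) * (#|F|%:R ^+ 2)
       + qq ^+ (2 * d) * #|F|%:R * Mfrak chi E
  /\
  S <= qq^-1 * (#|E|%:R ^+ 2) * (#|F|%:R ^+ 2)
       + qq ^+ (3 * d) *
         `| \sum_(m | normv m == 0) (fhat chi (ind E) m)^* * fhat chi (ind F) m | ^+ 2
       + qq ^+ (2 * d) * #|F|%:R * Mfrak_star chi E.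
Proof.
move=> qq S.
have h2 : (2 : K) != 0 by apply: contra hchar => two_eq0; rewrite inE /= two_eq0.
have qd_neq0 := @qd_neq0 K d.
have qd3_ge0 : 0 <= ((q K)%:R ^+ d : algC) ^+ 3 by rewrite exprn_ge0 ?ltW ?qd_gt0.
have rescale (M : algC) : ((q K)%:R ^+ d) ^+ 3 * (M * (((q K)%:R ^+ d)^-1 * #|F|%:R))
    = ((q K)%:R ^+ d) ^+ 2 * #|F|%:R * M by field.
rewrite !(mulnC _ d) !exprM.
split; apply: le_trans (sum_nu_sq_le hchi hnt h2 E F) _; rewrite -?addrA lerD2l.
  by rewrite -rescale ler_wpM2l ?(sum_sphere_pairing_sq_le hchi hnt).
by rewrite -rescale -mulrDr ler_wpM2l ?(sum_sphere_pairing_sq_le_star hchi hnt).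
Qed.
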